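(* Let $T$ be a $\delta$-Jordan Lie supertriple system over a field $\mathbb{K}$. Then $[C(T),QC(T)]\subseteq End(T,Z(T))$, i.e. for all homogeneous $D_1\in C(T)$ and $D_2\in QC(T)$ the map $[D_1,D_2]=D_1D_2-(-1)^{|D_1||D_2|}D_2D_1$ sends $T$ into $Z(T)$. Moreover, if $Z(T)=\{0\}$, then $[C(T),QC(T)]=\{0\}$.
   Context: A $\delta$-Jordan Lie supertriple system ($\delta\in\{1,-1\}$) is a $\mathbb{Z}_2$-graded vector space $T=T_{\bar 0}\oplus T_{\bar 1}$ with a trilinear product $[\cdot,\cdot,\cdot]$ such that, for all homogeneous $a,b,c,d,e$ (with $|a|$ the degree of $a$): $|[a,b,c]|=|a|+|b|+|c|$; $[b,a,c]=-\delta(-1)^{|a||b|}[a,b,c]$; $(-1)^{|a||c|}[a,b,c]+(-1)^{|b||a|}[b,c,a]+(-1)^{|c||b|}[c,a,b]=0$; and $[a,b,[c,d,e]]=[[a,b,c],d,e]+(-1)^{|c|(|a|+|b|)}[c,[a,b,d],e]+\delta(-1)^{(|a|+|b|)(|c|+|d|)}[c,d,[a,b,e]]$. $End(T)$ is the $\mathbb{Z}_2$-graded space of linear maps $T\to T$ with Lie superbracket $[D,D']=DD'-(-1)^{|D||D'|}D'D$; $End(T,Z(T))$ denotes the linear maps $T\to T$ with image in $Z(T)$. For a nonnegative integer $k$, $C^k(T)$ is the set of homogeneous $D\in End(T)$ with $\delta^{k}[D(a),b,c]=\delta^{k}(-1)^{|D||a|}[a,D(b),c]=\delta^{k}(-1)^{|D|(|a|+|b|)}[a,b,D(c)]=D([a,b,c])$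 for all homogeneous $a,b,c$; the centroid is $C(T)=\bigoplus_{k\ge0}C^k(T)$. The quasicentroid is $QC(T)=\{D\in End(T)\mid D([a,b,c])=[D(a),b,c]\ \forall a,b,c\in T\}$. The center is $Z(T)=\{a\in T\mid [a,b,c]=0\ \forall b,c\in T\}$. *)

From mathcomp Require Import all_boot all_algebra.
Set Implicit Arguments. Unset Strict Implicit. Unset Printing Implicit Defensive.
Import GRing.Theory.
Local Open Scope ring_scope.

Section JLSTS.
Variables (K : fieldType) (V0 V1 : lmodType K).

(* The Z_2-graded space T = T_0 (+) T_1, realized as the product V0 * V1. *)
Definition gsp := (V0 * V1)%type.

(* x is homogeneous of degree b (false = even 0, true = odd 1). *)
Definition homog (b : bool) (x : gsp) : Prop :=
  if b then x.1 = 0 else x.2 = 0.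

Definition sgn (b : bool) : K := if b then -1 else 1.

Definition lin (f : gsp -> gsp) : Prop :=
  forall (k : K) (x y : gsp), f (k *: x + y) = k *: f x + f y.

Definition trilinear (tp : gsp -> gsp -> gsp -> gsp) : Prop :=
  (forall b c, lin (fun a => tp a b c)) /\
  (forall a c, lin (fun b => tp a b c)) /\
  (forall a b, lin (fun c => tp a b c)).

Definition is_JLSTS (delta : K) (tp : gsp -> gsp -> gsp -> gsp) : Prop :=
  (delta = 1 \/ delta = -1) /\
  trilinear tp /\
  (forall a b c da db dc, homog da a -> homog db b -> homog dc c ->
     homog (addb (addb da db) dc) (tp a b c)) /\
  (forall a b c da db dc, homog da a -> homog db b -> homog dc c ->
     tp b a c = (- delta * sgn (da && db)) *: tp a b c) /\
  (forall a b c da db dc, homog da a -> homog db b -> homog dc c ->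
     sgn (da && dc) *: tp a b c + sgn (db && da) *: tp b c a
       + sgn (dc && db) *: tp c a b = 0) /\
  (forall a b c d e da db dc dd de, homog da a -> homog db b -> homog dc c ->
     homog dd d -> homog de e ->
     tp a b (tp c d e) =
       tp (tp a b c) d e
       + sgn (dc && addb da db) *: tp c (tp a b d) e
       + (delta * sgn (addb da db && addb dc dd)) *: tp c d (tp a b e)).

Definition homog_map (d : bool) (D : gsp -> gsp) : Prop :=
  forall b x, homog b x -> homog (addb b d) (D x).

Definition inCk (delta : K) (tp : gsp -> gsp -> gsp -> gsp)
    (k : nat) (d : bool) (D : gsp -> gsp) : Prop :=
  homog_map d D /\
  forall a b c da db dc, homog da a -> homog db b -> homog dc c ->
    [/\ delta ^+ k *: tp (D a) b c = D (tp a b c),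
        (delta ^+ k * sgn (d && da)) *: tp a (D b) c = D (tp a b c) &
        (delta ^+ k * sgn (d && addb da db)) *: tp a b (D c) = D (tp a b c)].

(* D in the centroid C(T) = sum over k of C^k(T) (as a subspace of End(T)) *)
Definition inC (delta : K) (tp : gsp -> gsp -> gsp -> gsp) (D : gsp -> gsp)
    : Prop :=
  exists (n : nat) (k : 'I_n -> nat) (d : 'I_n -> bool) (E : 'I_n -> gsp -> gsp),
    (forall i, lin (E i) /\ inCk delta tp (k i) (d i) (E i)) /\
    (forall x, D x = \sum_(i < n) E i x).

(* D in the quasicentroid QC(T) (D is assumed in End(T), i.e. linear) *)
Definition inQC (tp : gsp -> gsp -> gsp -> gsp) (D : gsp -> gsp) : Prop :=
  forall a b c, D (tp a b c) = tp (D a) b c.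

Definition inZ (tp : gsp -> gsp -> gsp -> gsp) (a : gsp) : Prop :=
  forall b c, tp a b c = 0.

Definition sbr (d1 d2 : bool) (D1 D2 : gsp -> gsp) (x : gsp) : gsp :=
  D1 (D2 x) - sgn (d1 && d2) *: D2 (D1 x).

End JLSTS.

From mathcomp Require Import all_boot all_algebra.
Import GRing.Theory.
Local Open Scope ring_scope.

(* A homogeneous element of the centroid of degree [d] is the sum of its
   components of degree [d] in the spaces [C^k(T)]: the components of the other
   degree add up to an element that is homogeneous of both degrees, hence zero.
   For [E] in [C^k(T)] of degree [d] and [D] in the quasicentroid,
   [delta^k [[E, D] y, b, c] = E D [y, b, c] - (-1)^(|E||D|) D E [y, b, c]],
   and the two terms agree: move [E] into the middle slot, where it commutes,
   up to that sign, with [D] acting on the first slot. As [delta <> 0] and [T]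
   is spanned by homogeneous elements, [[E, D]] maps [T] into [Z(T)]. *)

Section GradedSpace.
Context {K : fieldType} {V0 V1 : lmodType K}.
Local Notation T := (gsp V0 V1).

Section LinearMap.
Context {f : T -> T} (f_lin : lin f).

Lemma lin0 : f 0 = 0.
Proof.
apply: (addrI (f 0)); rewrite addr0.
by have := f_lin 1 0 0; rewrite !scale1r addr0 => <-.
Qed.

Lemma linD x y : f (x + y) = f x + f y.
Proof. by have := f_lin 1 x y; rewrite !scale1r. Qed.

Lemma linZ k x : f (k *: x) = k *: f x.
Proof. by have := f_lin k x 0; rewrite !addr0 lin0 addr0. Qed.

Lemma linB x y : f (x - y) = f x - f y.
Proof. by rewrite linD -scaleN1r linZ scaleN1r. Qed.

Lemma lin_sum I (r : seq I) (P : pred I) (F : I -> T) :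
  f (\sum_(i <- r | P i) F i) = \sum_(i <- r | P i) f (F i).
Proof. exact: (big_morph f linD lin0). Qed.

End LinearMap.

Lemma homog0 b : homog b (0 : T).
Proof. by case: b. Qed.

Lemma homogD b (x y : T) : homog b x -> homog b y -> homog b (x + y).
Proof. by case: b; rewrite /homog /= => -> ->; rewrite addr0. Qed.

Lemma homogN b (x : T) : homog b x -> homog b (- x).
Proof. by case: b; rewrite /homog /= => ->; rewrite oppr0. Qed.

Lemma homog_sum b I (r : seq I) (P : pred I) (F : I -> T) :
  (forall i, P i -> homog b (F i)) -> homog b (\sum_(i <- r | P i) F i).
Proof. by move=> hF; apply: big_ind => //; [exact: homog0 | exact: homogD]. Qed.

Lemma homog_eq0 b (x : T) : homog b x -> homog (~~ b) x -> x = 0.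
Proof. by case: b; case: x => ? ?; rewrite /homog /= => -> ->. Qed.

Lemma additive_eq0_homog (g : T -> T) : {morph g : x y / x + y} ->
  (forall b x, homog b x -> g x = 0) -> forall x, g x = 0.
Proof.
move=> gD g0 [x0 x1].
have -> : (x0, x1) = (x0, 0) + (0, x1) by congr pair; rewrite /= ?addr0 ?add0r.
by rewrite gD (g0 false) ?(g0 true) ?addr0.
Qed.

Lemma sgn_andDr (d a b : bool) :
  sgn K (d && addb a b) = sgn K (d && a) * sgn K (d && b).
Proof. by case: d a b => [] [] [] /=; rewrite /sgn ?mulrNN ?mulr1 ?mul1r. Qed.

Lemma lin_sbr d1 d2 (D1 D2 : T -> T) : lin D1 -> lin D2 -> lin (sbr d1 d2 D1 D2).
Proof.
move=> D1_lin D2_lin k x y; rewrite /sbr !(linD D1_lin, linD D2_lin).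
rewrite !(linZ D1_lin, linZ D2_lin) scalerBr scalerDr scalerA mulrC -scalerA.
by rewrite opprD addrACA.
Qed.

Lemma homog_sum_component {n} {d : 'I_n -> bool} {E : 'I_n -> T -> T}
    {D : T -> T} {dD : bool} :
  lin D -> homog_map dD D ->
  (forall i, lin (E i)) -> (forall i, homog_map (d i) (E i)) ->
  (forall x, D x = \sum_(i < n) E i x) ->
  forall x, D x = \sum_(i < n | d i == dD) E i x.
Proof.
move=> D_lin D_homog E_lin E_homog D_sum x.
apply/eqP; rewrite -subr_eq0; apply/eqP; move: x.
apply: additive_eq0_homog => [x y|b x hx].
  rewrite (linD D_lin) (eq_bigr _ (fun i _ => linD (E_lin i) x y)).
  by rewrite big_split opprD addrACA.
have off_deg : D x - \sum_(i < n | d i == dD) E i x =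
               \sum_(i < n | d i != dD) E i x.
  by rewrite D_sum (bigID (fun i => d i == dD)) /= addrAC subrr add0r.
apply: (homog_eq0 (addb b dD)).
  apply: homogD; first exact: D_homog hx.
  by apply/homogN/homog_sum => i /eqP dD_eq; rewrite -dD_eq; apply: E_homog.
rewrite off_deg; apply: homog_sum => i d_neq.
suff -> : ~~ addb b dD = addb b (d i) by exact: E_homog.
by move: d_neq; case: (d i); case: (dD); case: (b).
Qed.

Lemma sbr_suml {d1 d2 n} {P : pred 'I_n} {E : 'I_n -> T -> T} {D1 D2 : T -> T} :
  lin D2 -> (forall x, D1 x = \sum_(i < n | P i) E i x) ->
  forall x, sbr d1 d2 D1 D2 x = \sum_(i < n | P i) sbr d1 d2 (E i) D2 x.
Proof.
move=> D2_lin D1_sum x.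
by rewrite /sbr !D1_sum (lin_sum D2_lin) scaler_sumr -sumrB.
Qed.

Section Triple.
Context {delta : K} {tp : T -> T -> T -> T} (tp_tri : trilinear tp).

Lemma inZ_of_homog (f : T -> T) : lin f ->
  (forall y b c dy db dc, homog dy y -> homog db b -> homog dc c ->
     tp (f y) b c = 0) ->
  forall x, inZ tp (f x).
Proof.
have [tp1 [tp2 tp3]] := tp_tri.
move=> f_lin f0 x b c.
move: c; apply: (additive_eq0_homog (tp (f x) b)) => [? ?|dc c hc].
  exact: (linD (tp3 _ _)).
move: b; apply: (additive_eq0_homog (tp (f x) ^~ c)) => [? ?|db b hb].
  exact: (linD (tp2 _ _)).
move: x; apply: (additive_eq0_homog (fun x => tp (f x) b c)) => [? ?|dy y hy].
  by rewrite (linD f_lin) (linD (tp1 _ _)).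
exact: f0 hy hb hc.
Qed.

Lemma tp_sbr_Ck_QC_eq0 {k d1 d2} {E D : T -> T} :
  delta != 0 -> inCk delta tp k d1 E ->
  lin D -> homog_map d2 D -> inQC tp D ->
  forall y b c dy db dc, homog dy y -> homog db b -> homog dc c ->
  tp (sbr d1 d2 E D y) b c = 0.
Proof.
have [tp1 _] := tp_tri.
move=> delta_neq0 [_ E_C] D_lin D_homog D_QC y b c dy db dc hy hb hc.
set u := delta ^+ k; set s := sgn K (d1 && d2); set t := sgn K (d1 && dy).
have [E_left E_mid _] := E_C _ _ _ _ _ _ hy hb hc.
have [ED_left ED_mid _] := E_C _ _ _ _ _ _ (D_homog _ _ hy) hb hc.
apply: (scalerI (expf_neq0 k delta_neq0)).
rewrite /sbr (linB (tp1 _ _)) (linZ (tp1 _ _)) scaler0 scalerBr; apply/eqP.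
rewrite subr_eq0 ED_left -ED_mid sgn_andDr -/s -/t.
have -> : u * (t * s) = s * (u * t) by rewrite [t * s]mulrC mulrCA.
rewrite -scalerA -D_QC -(linZ D_lin) E_mid -E_left (linZ D_lin) D_QC.
by rewrite !scalerA mulrC.
Qed.

End Triple.
End GradedSpace.

Theorem theorem2p16 (K : fieldType) (V0 V1 : lmodType K) (delta : K)
    (tp : gsp V0 V1 -> gsp V0 V1 -> gsp V0 V1 -> gsp V0 V1) :
  is_JLSTS delta tp ->
  forall (D1 D2 : gsp V0 V1 -> gsp V0 V1) (d1 d2 : bool),
    lin D1 -> lin D2 -> homog_map d1 D1 -> homog_map d2 D2 ->
    inC delta tp D1 -> inQC tp D2 ->
    (forall x, inZ tp (sbr d1 d2 D1 D2 x)) /\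
    ((forall a, inZ tp a -> a = 0) -> forall x, sbr d1 d2 D1 D2 x = 0).
Proof.
move=> [delta_pm1 [tp_tri _]] D1 D2 d1 d2 D1_lin D2_lin D1_homog D2_homog.
move=> [n [k [d [E [E_C D1_sum]]]]] D2_QC.
have delta_neq0 : delta != 0.
  by case: delta_pm1 => ->; rewrite ?oppr_eq0 oner_eq0.
have E_lin i := (E_C i).1; have E_homog i := (E_C i).2.1.
have D1_deg := homog_sum_component D1_lin D1_homog E_lin E_homog D1_sum.
have [tp1 _] := tp_tri.
have sbr_center : forall x, inZ tp (sbr d1 d2 D1 D2 x).
  apply: (inZ_of_homog tp_tri); first exact: lin_sbr.
  move=> y b c dy db dc hy hb hc.
  rewrite (sbr_suml D2_lin D1_deg) (lin_sum (tp1 b c)).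
  apply: big1 => i /eqP <-.
  exact: (tp_sbr_Ck_QC_eq0 tp_tri delta_neq0 (E_C i).2 D2_lin D2_homog D2_QC
            _ _ _ _ _ _ hy hb hc).
by split=> // Z0 x; apply: Z0.
Qed.
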